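(* Let $n\ge 1$ be an integer and suppose that $A\subseteq\mathbb{Z}_5^n$ is sum-free. If $|A|>\frac32\cdot5^{n-1}$, then for every maximal proper subgroup $H$ of $\mathbb{Z}_5^n$, the number of $H$-cosets having non-empty intersection with $A$ is not exactly three.
   Context: $\mathbb{Z}_5^n$ denotes the elementary abelian $5$-group of rank $n$. A subset $S$ of an abelian group is sum-free if there are no $x,y,z\in S$ (not necessarily distinct) with $x+y=z$. *)

From mathcomp Require Import all_boot all_order all_algebra.
Set Implicit Arguments. Unset Strict Implicit. Unset Printing Implicit Defensive.
Import GRing.Theory.
Local Open Scope ring_scope.

Definition Z5n (n : nat) := 'rV['F_5]_n.

Definition sum_free (n : nat) (S : {set Z5n n}) : Prop :=
  forall x y z, x \in S -> y \in S -> z \in S -> x + y <> z.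

Definition is_subgroup (n : nat) (H : {set Z5n n}) : Prop :=
  0 \in H /\ (forall x y, x \in H -> y \in H -> x - y \in H).

Definition maximal_proper_subgroup (n : nat) (H : {set Z5n n}) : Prop :=
  [/\ is_subgroup H, H != [set: Z5n n] &
      forall K : {set Z5n n}, is_subgroup K -> H \subset K ->
        K = H \/ K = [set: Z5n n]].

Definition coset_add (n : nat) (H : {set Z5n n}) (x : Z5n n) : {set Z5n n} :=
  [set x + h | h in H].

Definition cosets_meeting (n : nat) (H A : {set Z5n n}) : {set {set Z5n n}} :=
  [set C in [set coset_add H x | x in [set: Z5n n]] | C :&: A != set0].

(* A maximal proper subgroup H of Z_5^n has index 5: for any a outside H its
   cosets are the layers H + k a, k in F_5.  Write A_k for the part of A in
   layer k.  If A_i is nonempty, translating A_j by an element of A_i lands in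
   layer i + j and, A being sum-free, misses A; hence |A_j| + |A_(i+j)| <= |H|.
   Likewise, if A_(i+j) is nonempty, |A_i| + |A_j| <= |H|.  Any three distinct
   i, j, k in F_5 have the property that each pair x, y among them has x - y,
   y - x or x + y among them as well, so if A meets exactly three layers the
   three pairwise bounds add up to 2|A| <= 3|H| = 3 * 5^(n-1). *)

From mathcomp Require Import all_boot all_order all_algebra.
From mathcomp Require Import zify.
Set Implicit Arguments. Unset Strict Implicit. Unset Printing Implicit Defensive.
Import GRing.Theory.
Local Open Scope ring_scope.

Lemma F5_triple_sum_or_diff (i j k : 'F_5) : uniq [:: i; j; k] ->
  let s := [:: i; j; k] in
  [/\ [|| j - i \in s, i - j \in s | i + j \in s],
      [|| k - j \in s, j - k \in s | j + k \in s] &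
      [|| k - i \in s, i - k \in s | i + k \in s]].
Proof.
by case: i => [[|[|[|[|[|//]]]]] ?]; case: j => [[|[|[|[|[|//]]]]] ?];
   case: k => [[|[|[|[|[|//]]]]] ?].
Qed.

Lemma leq_card_inj_setD (T : finType) (X C B : {set T}) (g : T -> T) :
  {in X &, injective g} -> {in X, forall y, g y \in C :\: B} ->
  (#|X| + #|C :&: B| <= #|C|)%N.
Proof.
move=> g_inj gX; rewrite -(cardsID B C) addnC leq_add2l -(card_in_imset g_inj).
by apply/subset_leq_card/subsetP => _ /imsetP [y yX ->]; apply: gX.
Qed.

Lemma sum3_le_pairwise (x y z N : nat) :
  (x + y <= N -> y + z <= N -> x + z <= N -> 2 * (x + y + z) <= 3 * N)%N.
Proof. lia. Qed.

Section MaximalSubgroup.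
Variable n : nat.
Local Notation G := (Z5n n).
Variable H : {set G}.
Hypothesis subH : is_subgroup H.

Lemma subgroup0 : 0 \in H. Proof. by case: subH. Qed.

Lemma subgroupB x y : x \in H -> y \in H -> x - y \in H.
Proof. by case: subH => _; apply. Qed.

Lemma subgroupD x y : x \in H -> y \in H -> x + y \in H.
Proof. exact: (GRing.zmod_closedD subH).2. Qed.

Lemma subgroupZ (c : 'F_5) x : x \in H -> c *: x \in H.
Proof.
move=> Hx; rewrite -(natr_Zp c) scaler_nat.
by elim: (c : nat) => [|m IHm]; rewrite ?mulr0n ?subgroup0 // mulrS subgroupD.
Qed.

Lemma mem_coset_add x y : (y \in coset_add H x) = (y - x \in H).
Proof.
apply/imsetP/idP => [[h Hh ->]|Hyx]; first by rewrite addrC addKr.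
by exists (y - x) => //; rewrite addrC subrK.
Qed.

Lemma coset_add_eq x y : x - y \in H -> coset_add H x = coset_add H y.
Proof.
move=> Hxy; apply/setP => z; rewrite !mem_coset_add.
have -> : z - y = (z - x) + (x - y) by rewrite addrA subrK.
apply/idP/idP => [Hzx|]; first exact: subgroupD.
by move=> /subgroupB /(_ Hxy); rewrite addrK.
Qed.

Lemma card_coset_add x : #|coset_add H x| = #|H|.
Proof. exact: card_imset (addrI x). Qed.

Variable a : G.
Hypothesis aH : a \notin H.

Lemma scale_notin_subgroup (c : 'F_5) : c != 0 -> c *: a \notin H.
Proof.
move=> c_neq0; apply: contra aH => /(subgroupZ c^-1).
by rewrite scalerA mulVf // scale1r.
Qed.

Lemma subgroup_scale_inj x k l :
  x - k *: a \in H -> x - l *: a \in H -> k = l.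
Proof.
move=> Hk Hl; apply/eqP; rewrite -subr_eq0; apply: contraTT (subgroupB Hl Hk).
have -> : x - l *: a - (x - k *: a) = (k - l) *: a.
  by rewrite scalerBl opprB addrC addrA subrK.
exact: scale_notin_subgroup.
Qed.

Definition layer (k : 'F_5) := coset_add H (k *: a).

Lemma mem_layer k x : (x \in layer k) = (x - k *: a \in H).
Proof. exact: mem_coset_add. Qed.

Lemma layer_inj : injective layer.
Proof.
move=> k l kl; have : k *: a \in layer l.
  by rewrite -kl mem_layer subrr subgroup0.
by rewrite mem_layer; apply: subgroup_scale_inj; rewrite subrr subgroup0.
Qed.

Variable A : {set G}.
Hypothesis sfA : sum_free A.

Definition slice k := layer k :&: A.
Definition support := [set k | slice k != set0].

Lemma slice_add_bound i j : slice i != set0 ->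
  (#|slice j| + #|slice (i + j)%R| <= #|H|)%N.
Proof.
case/set0Pn => x; rewrite inE mem_layer => /andP [Hx xA].
rewrite -(card_coset_add ((i + j) *: a)).
apply: leq_card_inj_setD (in2W (addrI x)) _ => y.
rewrite inE mem_layer => /andP [Hy yA]; rewrite inE mem_coset_add.
rewrite scalerDl opprD addrACA subgroupD // andbT.
by apply/negP => /(sfA xA yA).
Qed.

Lemma slice_sub_bound i j : slice (i + j) != set0 ->
  (#|slice i| + #|slice j| <= #|H|)%N.
Proof.
case/set0Pn => z; rewrite inE mem_layer => /andP [Hz zA].
rewrite -(card_coset_add (j *: a)).
have sub_inj : injective (fun y => z - y) by move=> y y' /addrI /oppr_inj.
apply: leq_card_inj_setD (in2W sub_inj) _ => y.
rewrite inE mem_layer => /andP [Hy yA]; rewrite inE mem_coset_add.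
have -> : z - y - j *: a = (z - (i + j) *: a) - (y - i *: a).
  by rewrite scalerDl opprD addrA opprB addrACA addrNK addrA addrAC.
rewrite subgroupB // andbT.
by apply/negP => zyA; apply: (sfA zyA yA zA); rewrite subrK.
Qed.

Lemma slice_pair_bound i j :
  [|| j - i \in support, i - j \in support | i + j \in support] ->
  (#|slice i| + #|slice j| <= #|H|)%N.
Proof.
rewrite !inE => /or3P [] nonempty.
- by have := slice_add_bound i nonempty; rewrite subrK.
- by have := slice_add_bound j nonempty; rewrite subrK addnC.
- exact: slice_sub_bound.
Qed.

Hypothesis Hmax : forall K : {set G}, is_subgroup K -> H \subset K ->
  K = H \/ K = [set: G].

Lemma subgroup_scale_cover x : exists k, x - k *: a \in H.
Proof.
pose K := [set y : G | [exists k : 'F_5, y - k *: a \in H]].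
have memK y k : y - k *: a \in H -> y \in K.
  by move=> Hyk; rewrite inE; apply/existsP; exists k.
have subK : is_subgroup K.
  split; first by apply: (memK _ 0); rewrite scale0r subr0 subgroup0.
  move=> u v; rewrite !inE => /existsP [k Hk] /existsP [l Hl].
  apply/existsP; exists (k - l).
  have -> : u - v - (k - l) *: a = (u - k *: a) - (v - l *: a).
    by rewrite scalerBl !opprB addrACA [RHS]addrACA [- v + _]addrC.
  exact: subgroupB.
have HK : H \subset K.
  by apply/subsetP => u Hu; apply: (memK _ 0); rewrite scale0r subr0.
have aK : a \in K by apply: (memK _ 1); rewrite scale1r subrr subgroup0.
case: (Hmax subK HK) => [KH|KT]; first by move: aH; rewrite -KH aK.
by have := in_setT x; rewrite -KT inE => /existsP.
Qed.

Lemma card_layer_partition (B : {set G}) :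
  #|B| = (\sum_(k : 'F_5) #|layer k :&: B|)%N.
Proof.
have cardIE k : #|layer k :&: B| = (\sum_(x in B) (x \in layer k))%N.
  rewrite -sum1_card big_mkcond [RHS]big_mkcond; apply: eq_bigr => x _.
  by rewrite inE; case: (x \in B); rewrite ?andbT ?andbF.
rewrite (eq_bigr _ (fun k _ => cardIE k)) exchange_big /= -sum1_card.
apply: eq_bigr => x _; have [k Hk] := subgroup_scale_cover x.
rewrite (bigD1 k) ?mem_layer ?Hk //= big1 // => l lk.
rewrite mem_layer; case: (boolP (_ \in H)) => // Hl.
by rewrite (subgroup_scale_inj Hl Hk) eqxx in lk.
Qed.

Lemma card_maximal_subgroup : (5 ^ n = 5 * #|H|)%N.
Proof.
have := card_layer_partition setT.
rewrite cardsT card_mx card_Fp // mul1n => ->.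
under eq_bigr do rewrite setIT card_coset_add.
by rewrite sum_nat_const card_Fp.
Qed.

Lemma card_cosets_meeting : #|cosets_meeting H A| = #|support|.
Proof.
rewrite -(card_imset _ layer_inj); apply: eq_card => D.
rewrite /cosets_meeting inE; apply/andP/imsetP => [[/imsetP [x _ ->] xA]|[k]].
  have [k Hk] := subgroup_scale_cover x.
  by exists k; rewrite ?inE /slice /layer -(coset_add_eq Hk).
by rewrite inE => Ak ->; split=> //; apply/imsetP; exists (k *: a).
Qed.

Lemma card_slices : #|A| = (\sum_(k <- enum support) #|slice k|)%N.
Proof.
rewrite card_layer_partition big_enum /= [RHS]big_mkcond; apply: eq_bigr => k _.
by rewrite inE /slice; case: eqP => [->|]; rewrite ?cards0.
Qed.

End MaximalSubgroup.

Theorem proposition1 (n : nat) (A : {set Z5n n}) :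
  (1 <= n)%N -> sum_free A -> (3 * 5 ^ n.-1 < 2 * #|A|)%N ->
  forall H : {set Z5n n}, maximal_proper_subgroup H ->
    #|cosets_meeting H A| <> 3%N.
Proof.
move=> n_gt0 sfA largeA H [subH HnT Hmax] three.
have /subsetPn [a _ aH] : ~~ ([set: Z5n n] \subset H) by rewrite subTset.
have := card_cosets_meeting subH aH A Hmax; rewrite three cardE.
case E: (enum _) => [|i [|j [|k []]]] // _.
have memS x : (x \in [:: i; j; k]) = (x \in support H a A).
  by rewrite -E mem_enum.
have uniqS : uniq [:: i; j; k] by rewrite -E enum_uniq.
have [ij jk ik] := F5_triple_sum_or_diff uniqS; rewrite !memS in ij jk ik.
have cardH : #|H| = (5 ^ n.-1)%N.
  apply/eqP; rewrite -(eqn_pmul2l (isT : 0 < 5)%N).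
  by rewrite -(card_maximal_subgroup subH aH Hmax) -expnS prednK.
have := card_slices subH aH A Hmax.
rewrite E !big_cons big_nil addn0 addnA => cardA.
have := sum3_le_pairwise (slice_pair_bound subH sfA ij)
  (slice_pair_bound subH sfA jk) (slice_pair_bound subH sfA ik).
rewrite -cardA cardH => le_A.
by move: largeA; rewrite ltnNge le_A.
Qed.
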